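(* Let $\mathcal C$ be a parsummable category and fix an injection $\phi\colon\omega\times\omega\to\omega$. Then $S_{\mathcal C}\colon\Theta(\mathcal C)\to\mathcal C$ (described below) is a well-defined functor, and it preserves sums.
   Context: Let $\omega=\{1,2,\dots\}$, $\mathbf m=\{1,\dots,m\}$, $\mathcal M$ the monoid of injections $\omega\to\omega$. A parsummable category is a small $E\mathcal M$-category (strict action of the chaotic category on $\mathcal M$; $u_*$ the action, $[v,u]\colon u_*\Rightarrow v_*$) all of whose objects have finite support (intersection of finite $A\subset\omega$ with $u_*X=X$ for all $u$ fixing $A$ pointwise), with an object $0$ of empty support and a strictly unital, associative, commutative, equivariant sum $+$ on the full subcategory $\mathcal C\boxtimes\mathcal C$ of disjointly supported pairs. For a finite set $A$, injections $\phi,\phi'\colon A\times\omega\to\omega$ and $X_\bullet=(X_a)_{a\in A}$: $\phi_*(X_\bullet)=\sum_a\phi(a,-)_*(X_a)$, $[\phi',\phi]_{X_\bullet}=\sum_a[\phi'(a,-),\phi(a,-)]_{X_a}$. $\Sigma(\mathcal C)$ is the permutative category with objects finite sequences of objects of $\mathcal C$ (unit $\epsilon$ the empty sequence), morphisms $(X_1,\dots,X_m)\to(Y_1,\dots,Y_n)$ classes $[\psi,f,\phi]$ (injections $\phi\colon\mathbf m\times\omega\to\omega$, $\psi\colon\mathbf n\times\omega\to\omega$, $f\colon\phi_*(X_\bullet)\to\psi_*(Y_\bullet)$) modulo $(\psi,f,\phi)\sim(\psi',[\psi',\psi]f[\phi,\phi'],\phi')$; every morphism has a unique representative with prescribed $\phi,\psi$;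 composition $[\rho,g,\theta][\psi,f,\phi]=[\rho,g[\theta,\psi]f,\phi]$; tensor product concatenation on objects and $[\psi,f,\phi]\otimes[\rho,g,\theta]=[\psi+\rho,f+g,\phi+\theta]$ for representatives with disjoint images ($(\phi+\theta)(i,x)=\phi(i,x)$ for $i\le m$, $\theta(i-m,x)$ otherwise); symmetry $[\bar\phi,\mathrm{id},\phi]$ with $\bar\phi(i,x)=\phi(i+m,x)$ for $i\le n$, $\phi(i-n,x)$ otherwise. For a small permutative category $\mathscr P$, $\Phi(\mathscr P)$ is the parsummable category with objects sequences $P=(P_1,P_2,\dots)$ with $P_i=\mathbf 1$ for almost all $i$, morphisms $P\to Q$ the morphisms $\bigotimes_{i\in\omega}P_i\to\bigotimes_{i\in\omega}Q_i$ in $\mathscr P$ (ordered tensor of non-unit entries), support $\{i:P_i\ne\mathbf1\}$, sum of disjointly supported objects by merging entries, and sum of morphisms $f+g$ given by $f\otimes g$ conjugated with the coherence isomorphisms associated to the tautological bijections $\mathrm{supp}(P)\amalg\mathrm{supp}(P')\to\mathrm{supp}(P)\cup\mathrm{supp}(P')$ (the disjoint union ordered with the first summand before the second). $\Theta(\mathcal C)$ is the full parsummable subcategory of $\Phi\Sigma(\mathcal C)$ on sequences each of whose entries is $\epsilon$ or a $1$-tuple. For finite $A\subset\omega$ and $X_\bullet=(X_a)_{a\in A}$ in $\mathcal C$, $\langle A,X_\bullet\rangle\in\Theta(\mathcal C)$ has $i$-th entry $(X_i)$ for $i\in A$ and $\epsilon$ otherwise; every object is uniquely of this form, $\mathrm{supp}\langle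 A,X_\bullet\rangle=A$, and $\langle A,X_\bullet\rangle+\langle B,Y_\bullet\rangle=\langle A\cup B,X_\bullet+Y_\bullet\rangle$ for $A\cap B=\varnothing$. Let $\kappa_A\colon\{1,\dots,|A|\}\to A$ be the order-preserving bijection and $\kappa_A^*X_\bullet=(X_{\kappa_A(1)},\dots,X_{\kappa_A(|A|)})$; a morphism $\langle A,X_\bullet\rangle\to\langle B,Y_\bullet\rangle$ in $\Theta(\mathcal C)$ is a morphism $\kappa_A^*X_\bullet\to\kappa_B^*Y_\bullet$ in $\Sigma(\mathcal C)$. $S_{\mathcal C}$: on objects $S_{\mathcal C}\langle A,X_\bullet\rangle=(\phi|_A)_*(X_\bullet)$, where $\phi|_A$ is the restriction of $\phi$ to $A\times\omega$; a morphism $\alpha\colon\langle A,X_\bullet\rangle\to\langle B,Y_\bullet\rangle$ has a unique representative of the form $(\phi|_B\circ(\kappa_B\times\mathrm{id}),f,\phi|_A\circ(\kappa_A\times\mathrm{id}))$ and $S_{\mathcal C}(\alpha)=f$. A functor $G$ between parsummable categories preserves sums if $G(0)=0$, $G\times G$ maps disjointly supported pairs to disjointly supported pairs, and $G$ commutes with $+$ on objects and morphisms. *)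

(* MathComp (boot only) + Stdlib Relations.
   omega = {1,2,...} is modelled by nat = {0,1,2,...} (order-preserving
   relabelling n |-> n+1). *)
From Stdlib Require Import Relation_Operators.
From mathcomp Require Import all_boot.
Set Implicit Arguments. Unset Strict Implicit. Unset Printing Implicit Defensive.

(* act u X = u_* X,  actm u f = u_* f,  tr v u X = [v,u]_X : u_*X -> v_*X.
   compm g f = g o f.  Composition is total but only constrained on composable
   pairs; the action is only constrained for injective u. *)
Record EMcat : Type := {
  Ob : Type; Mor : Type;
  dom : Mor -> Ob; cod : Mor -> Ob;
  idm : Ob -> Mor; compm : Mor -> Mor -> Mor;
  act : (nat -> nat) -> Ob -> Ob;
  actm : (nat -> nat) -> Mor -> Mor;
  tr : (nat -> nat) -> (nat -> nat) -> Ob -> Mor;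
  dom_idm : forall X, dom (idm X) = X;
  cod_idm : forall X, cod (idm X) = X;
  dom_comp : forall f g, cod f = dom g -> dom (compm g f) = dom f;
  cod_comp : forall f g, cod f = dom g -> cod (compm g f) = cod g;
  comp_idl : forall f, compm (idm (cod f)) f = f;
  comp_idr : forall f, compm f (idm (dom f)) = f;
  compA : forall f g h, cod f = dom g -> cod g = dom h ->
            compm h (compm g f) = compm (compm h g) f;
  dom_actm : forall u f, injective u -> dom (actm u f) = act u (dom f);
  cod_actm : forall u f, injective u -> cod (actm u f) = act u (cod f);
  actm_idm : forall u X, injective u -> actm u (idm X) = idm (act u X);
  actm_comp : forall u f g, injective u -> cod f = dom g ->
            actm u (compm g f) = compm (actm u g) (actm u f);
  dom_tr : forall u v X, injective u -> injective v -> dom (tr v u X) = act u X;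
  cod_tr : forall u v X, injective u -> injective v -> cod (tr v u X) = act v X;
  tr_id : forall u X, injective u -> tr u u X = idm (act u X);
  tr_comp : forall u v w X, injective u -> injective v -> injective w ->
            compm (tr w v X) (tr v u X) = tr w u X;
  tr_nat : forall u v f, injective u -> injective v ->
            compm (actm v f) (tr v u (dom f)) = compm (tr v u (cod f)) (actm u f);
  act_id : forall X, act id X = X;
  actm_id : forall f, actm id f = f;
  act_comp : forall u v X, injective u -> injective v ->
            act (u \o v) X = act u (act v X);
  actm_comp_act : forall u v f, injective u -> injective v ->
            actm (u \o v) f = actm u (actm v f);
  tr_comp_act : forall u u' v v' X, injective u -> injective u' ->
            injective v -> injective v' ->
            tr (u' \o v') (u \o v) X = compm (tr u' u (act v' X)) (actm u (tr v' v X))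
}.

Definition supported (C : EMcat) (X : Ob C) (A : seq nat) : Prop :=
  forall u : nat -> nat, injective u -> (forall a, a \in A -> u a = a) -> act u X = X.
Definition in_supp (C : EMcat) (X : Ob C) (i : nat) : Prop :=
  forall A : seq nat, supported X A -> i \in A.
Definition disj_supp (C : EMcat) (X Y : Ob C) : Prop :=
  forall i, in_supp X i -> in_supp Y i -> False.

(* add / addm are the sum functor on C [x] C; they are total functions whose
   values on non-disjointly supported pairs are irrelevant (unconstrained). *)
Record parsummable : Type := {
  em :> EMcat;
  zero : Ob em;
  add : Ob em -> Ob em -> Ob em;
  addm : Mor em -> Mor em -> Mor em;
  fin_supp : forall X : Ob em, exists A, supported X A;
  zero_supp : forall i, ~ in_supp zero i;
  dom_addm : forall f g, disj_supp (dom f) (dom g) -> disj_supp (cod f) (cod g) ->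
      dom (addm f g) = add (dom f) (dom g);
  cod_addm : forall f g, disj_supp (dom f) (dom g) -> disj_supp (cod f) (cod g) ->
      cod (addm f g) = add (cod f) (cod g);
  addm_idm : forall X Y, disj_supp X Y -> addm (idm X) (idm Y) = idm (add X Y);
  addm_comp : forall f g f' g', cod f = dom f' -> cod g = dom g' ->
      disj_supp (dom f) (dom g) -> disj_supp (cod f) (cod g) ->
      disj_supp (cod f') (cod g') ->
      addm (compm f' f) (compm g' g) = compm (addm f' g') (addm f g);
  add0X : forall X, add zero X = X;
  addm0f : forall f, addm (idm zero) f = f;
  addA : forall X Y Z, disj_supp X Y -> disj_supp X Z -> disj_supp Y Z ->
      add (add X Y) Z = add X (add Y Z);
  addmA : forall f g h,
      disj_supp (dom f) (dom g) -> disj_supp (dom f) (dom h) -> disj_supp (dom g) (dom h) ->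
      disj_supp (cod f) (cod g) -> disj_supp (cod f) (cod h) -> disj_supp (cod g) (cod h) ->
      addm (addm f g) h = addm f (addm g h);
  addC : forall X Y, disj_supp X Y -> add X Y = add Y X;
  addmC : forall f g, disj_supp (dom f) (dom g) -> disj_supp (cod f) (cod g) ->
      addm f g = addm g f;
  act_add : forall u X Y, injective u -> disj_supp X Y ->
      act u (add X Y) = add (act u X) (act u Y);
  actm_addm : forall u f g, injective u ->
      disj_supp (dom f) (dom g) -> disj_supp (cod f) (cod g) ->
      actm u (addm f g) = addm (actm u f) (actm u g);
  tr_add : forall u v X Y, injective u -> injective v -> disj_supp X Y ->
      tr v u (add X Y) = addm (tr v u X) (tr v u Y)
}.

(* injections  m x omega -> omega  are functions phi : nat -> nat -> nat
   (first argument = 0-based position) injective on {i < m} x nat *)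
Definition inj_on (m : nat) (phi : nat -> nat -> nat) : Prop :=
  forall i j x y, i < m -> j < m -> phi i x = phi j y -> i = j /\ x = y.

Fixpoint pushf (C : parsummable) (phi : nat -> nat -> nat) (Xs : seq (Ob C)) : Ob C :=
  if Xs is X :: Xs' then add (act (phi 0) X) (pushf (fun i => phi i.+1) Xs')
  else zero C.

Fixpoint trf (C : parsummable) (phi' phi : nat -> nat -> nat) (Xs : seq (Ob C)) : Mor C :=
  if Xs is X :: Xs' then
    addm (tr (phi' 0) (phi 0) X) (trf (fun i => phi' i.+1) (fun i => phi i.+1) Xs')
  else idm (zero C).

Record sig_mor (C : parsummable) := SigMor {
  s_src : seq (Ob C); s_tgt : seq (Ob C);
  s_in : nat -> nat -> nat; s_out : nat -> nat -> nat; s_f : Mor C }.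

Definition sig_valid (C : parsummable) (t : sig_mor C) : Prop :=
  inj_on (size (s_src t)) (s_in t) /\ inj_on (size (s_tgt t)) (s_out t) /\
  dom (s_f t) = pushf (s_in t) (s_src t) /\ cod (s_f t) = pushf (s_out t) (s_tgt t).

Definition sig_rel (C : parsummable) (t t' : sig_mor C) : Prop :=
  sig_valid t /\ sig_valid t' /\ s_src t' = s_src t /\ s_tgt t' = s_tgt t /\
  s_f t' = compm (trf (s_out t') (s_out t) (s_tgt t))
                (compm (s_f t) (trf (s_in t) (s_in t') (s_src t))).

Definition sig_equiv (C : parsummable) : sig_mor C -> sig_mor C -> Prop :=
  clos_refl_sym_trans (sig_mor C) (@sig_rel C).

(* the representative of the class of t with prescribed injections phi, psi *)
Definition srep (C : parsummable) (t : sig_mor C) (phi psi : nat -> nat -> nat) : sig_mor C :=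
  SigMor (s_src t) (s_tgt t) phi psi
    (compm (trf psi (s_out t) (s_tgt t)) (compm (s_f t) (trf (s_in t) phi (s_src t)))).

Definition scomp (C : parsummable) (t2 t1 : sig_mor C) : sig_mor C :=
  SigMor (s_src t1) (s_tgt t2) (s_in t1) (s_out t2)
    (compm (s_f t2) (compm (trf (s_in t2) (s_out t1) (s_tgt t1)) (s_f t1))).

Definition cat_inj (m : nat) (phi theta : nat -> nat -> nat) : nat -> nat -> nat :=
  fun i x => if i < m then phi i x else theta (i - m) x.
Definition postc (e : nat -> nat) (phi : nat -> nat -> nat) : nat -> nat -> nat :=
  fun i x => e (phi i x).

(* tensor product: first pass to representatives with disjoint images
   (even resp. odd values), then [psi+rho, f+g, phi+theta] *)
Definition stensor (C : parsummable) (t1 t2 : sig_mor C) : sig_mor C :=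
  let a := srep t1 (postc (fun x => x.*2) (s_in t1)) (postc (fun x => x.*2) (s_out t1)) in
  let b := srep t2 (postc (fun x => x.*2.+1) (s_in t2)) (postc (fun x => x.*2.+1) (s_out t2)) in
  SigMor (s_src t1 ++ s_src t2) (s_tgt t1 ++ s_tgt t2)
    (cat_inj (size (s_src t1)) (s_in a) (s_in b))
    (cat_inj (size (s_tgt t1)) (s_out a) (s_out b))
    (addm (s_f a) (s_f b)).

Definition pinj (i x : nat) : nat := 2 ^ i * x.*2.+1.

(* coherence isomorphism of Sigma(C) for a reindexing: target entry j is the
   source entry tau j;  it is [phi o (tau x id), id, phi] *)
Definition sperm (C : parsummable) (Xs Ys : seq (Ob C)) (tau : nat -> nat) : sig_mor C :=
  SigMor Xs Ys pinj (fun j x => pinj (tau j) x) (idm (pushf pinj Xs)).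

(* <A, X_.> is the list of pairs (a, X_a), a in A, in increasing order of a;
   so map fst = A (listed increasingly) and map snd = kappa_A^* X_. *)
Definition th_ob (C : parsummable) (P : seq (nat * Ob C)) : Prop := sorted ltn (map fst P).
(* supp <A,X_.> = A *)
Definition th_disj (C : parsummable) (P Q : seq (nat * Ob C)) : Prop :=
  forall i, i \in map fst P -> i \in map fst Q -> False.
Definition th_add (C : parsummable) (P Q : seq (nat * Ob C)) : seq (nat * Ob C) :=
  merge (fun p q : nat * Ob C => p.1 <= q.1) P Q.

Record th_mor (C : parsummable) := ThMor {
  t_src : seq (nat * Ob C); t_tgt : seq (nat * Ob C); t_rep : sig_mor C }.

Definition th_valid (C : parsummable) (a : th_mor C) : Prop :=
  th_ob (t_src a) /\ th_ob (t_tgt a) /\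
  s_src (t_rep a) = map snd (t_src a) /\ s_tgt (t_rep a) = map snd (t_tgt a) /\
  sig_valid (t_rep a).

Definition th_equiv (C : parsummable) (a b : th_mor C) : Prop :=
  t_src a = t_src b /\ t_tgt a = t_tgt b /\ sig_equiv (t_rep a) (t_rep b).

Definition th_comp (C : parsummable) (b a : th_mor C) : th_mor C :=
  ThMor (t_src a) (t_tgt b) (scomp (t_rep b) (t_rep a)).

(* sum of morphisms: (a (x) b) conjugated with the coherence isos of the
   tautological bijections supp P |_| supp P' -> supp P u supp P' *)
Definition th_addm (C : parsummable) (a b : th_mor C) : th_mor C :=
  let P := t_src a in let P' := t_src b in let Q := t_tgt a in let Q' := t_tgt b in
  ThMor (th_add P P') (th_add Q Q')
    (scomp
       (sperm (map snd Q ++ map snd Q') (map snd (th_add Q Q'))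
              (fun j => index (nth 0 (map fst (th_add Q Q')) j) (map fst Q ++ map fst Q')))
       (scomp (stensor (t_rep a) (t_rep b))
              (sperm (map snd (th_add P P')) (map snd P ++ map snd P')
                     (fun k => index (nth 0 (map fst P ++ map fst P') k)
                                     (map fst (th_add P P')))))).

Definition restr (C : parsummable) (phi : nat -> nat -> nat) (P : seq (nat * Ob C)) :
  nat -> nat -> nat := fun i x => phi (nth 0 (map fst P) i) x.

Definition S_ob (C : parsummable) (phi : nat -> nat -> nat) (P : seq (nat * Ob C)) : Ob C :=
  pushf (restr phi P) (map snd P).

Definition S_mor (C : parsummable) (phi : nat -> nat -> nat) (a : th_mor C) : Mor C :=
  s_f (srep (t_rep a) (restr phi (t_src a)) (restr phi (t_tgt a))).

From Pilot Require Import Defs.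
From Stdlib Require Import Relation_Operators.
From mathcomp Require Import all_boot.
From Stdlib Require Import Classical FunctionalExtensionality Permutation.
Set Implicit Arguments. Unset Strict Implicit. Unset Printing Implicit Defensive.

(* Everything reduces to three properties of the transition morphisms
   [psi', psi]_X = sum_a [psi'(a,-), psi(a,-)]_(X_a): they compose as
   [psi'', psi'][psi', psi] = [psi'', psi], they are identities on the diagonal,
   and, being sums of pairwise disjointly supported terms in a partial
   commutative monoid, they split along concatenations and do not change when
   the entries are rearranged.  The first two give well-definedness and
   functoriality.  For sums, the coherence isomorphisms in the sum of Theta(C)
   are transition morphisms between two arrangements of the same entries, hence
   identities once both sides are restricted along phi, and the tensor product
   of Sigma(C) becomes the sum of C. *)

Definition swap_nat (p q x : nat) : nat :=
  if x == p then q else if x == q then p else x.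

Lemma swap_natK p q : involutive (swap_nat p q).
Proof.
move=> x; rewrite /swap_nat.
case: (eqVneq x p) => [->|xp]; first by rewrite eqxx; case: (eqVneq q p) => [->|]; rewrite ?eqxx.
case: (eqVneq x q) => [->|xq]; first by rewrite eqxx.
by rewrite (negbTE xp) (negbTE xq).
Qed.

Lemma bij_agree_inj (u : nat -> nat) (A : seq nat) : injective u ->
  exists t t' : nat -> nat, [/\ cancel t t', cancel t' t & {in A, t =1 u}].
Proof.
move=> u_inj; elim: A => [|a A [t [t' [tK t'K tu]]]]; first by exists id, id.
have [aA|aNA] := boolP (a \in A).
  by exists t, t'; split=> // b; rewrite inE => /predU1P[->|]; apply: tu.
exists (swap_nat (t a) (u a) \o t), (t' \o swap_nat (t a) (u a)); split.
- by move=> x /=; rewrite swap_natK tK.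
- by move=> x /=; rewrite t'K swap_natK.
move=> b; rewrite inE => /predU1P[->|bA] /=; first by rewrite /swap_nat eqxx.
rewrite -(tu b bA) /swap_nat.
have [/(can_inj tK) eba|_] := eqVneq (t b) (t a); first by rewrite -eba bA in aNA.
have [|//] := eqVneq (t b) (u a).
by rewrite (tu b bA) => /u_inj eba; rewrite -eba bA in aNA.
Qed.

Section Supports.
Variable C : parsummable.
Implicit Types (X Y Z : Ob C) (A B : seq nat) (u w : nat -> nat).

Lemma act_agree X A u w : supported X A -> injective u -> injective w ->
  {in A, u =1 w} -> act u X = act w X.
Proof.
move=> sX u_inj w_inj uw.
(* Every v agreeing on A with a bijection t is t \o (t^-1 \o v), and t^-1 \o v fixes A. *)
have [t [t' [tK t'K tu]]] := bij_agree_inj A u_inj.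
suff act_t v : injective v -> {in A, v =1 t} -> act v X = act t X.
  by rewrite act_t // ?(act_t w) // => a aA; rewrite tu // uw.
move=> v_inj vt.
have t'v_inj : injective (t' \o v) := inj_comp (can_inj t'K) v_inj.
have -> : v = t \o (t' \o v) by apply: functional_extensionality => x /=; rewrite t'K.
rewrite act_comp //; last exact: can_inj tK.
by rewrite sX // => a aA /=; rewrite vt ?tK.
Qed.

Lemma supported_act X A u : supported X A -> injective u -> supported (act u X) (map u A).
Proof.
move=> sX u_inj v v_inj vA; rewrite -act_comp //.
apply: (act_agree sX) => //; first exact: inj_comp.
by move=> a aA /=; rewrite vA ?map_f.
Qed.

Lemma supported_add X Y A B : supported X A -> supported Y B -> disj_supp X Y ->
  supported (add X Y) (A ++ B).
Proof.
move=> sX sY dXY u u_inj uAB.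
by rewrite act_add // sX ?sY // => a aS; apply: uAB; rewrite mem_cat aS ?orbT.
Qed.

Definition supp_sub X (S : nat -> Prop) : Prop := forall i, in_supp X i -> S i.

Lemma not_in_suppP X i : ~ in_supp X i -> exists2 A, supported X A & i \notin A.
Proof.
move=> iNX; apply: NNPP => noA; apply: iNX => A sA; apply: NNPP => iNA.
by apply: noA; exists A => //; apply/negP.
Qed.

Lemma supp_sub_act X u : injective u -> supp_sub (act u X) (fun i => exists x, u x = i).
Proof.
move=> u_inj i iX; have [A sA] := fin_supp X.
by have /mapP[x _ ->] := iX _ (supported_act sA u_inj); exists x.
Qed.

Lemma supp_sub_add X Y (S T : nat -> Prop) : disj_supp X Y -> supp_sub X S -> supp_sub Y T ->
  supp_sub (add X Y) (fun i => S i \/ T i).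
Proof.
move=> dXY sXS sYT i iXY; apply: NNPP => /not_or_and[NSi NTi].
have [A sA iNA] : exists2 A, supported X A & i \notin A by apply: not_in_suppP => /sXS.
have [B sB iNB] : exists2 B, supported Y B & i \notin B by apply: not_in_suppP => /sYT.
by have := iXY _ (supported_add sA sB dXY); rewrite mem_cat (negbTE iNA) (negbTE iNB).
Qed.

Lemma disj_supp_sub X Y (S T : nat -> Prop) : supp_sub X S -> supp_sub Y T ->
  (forall i, S i -> T i -> False) -> disj_supp X Y.
Proof. by move=> sXS sYT ST i /sXS Si /sYT; apply: ST. Qed.

Lemma disj_supp_sym X Y : disj_supp X Y -> disj_supp Y X.
Proof. by move=> dXY i iY iX; apply: dXY iX iY. Qed.

Lemma disj_supp0 X : disj_supp X (zero C).
Proof. by move=> i _ /zero_supp. Qed.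

Lemma disj_supp_add X Y Z : disj_supp X Y -> disj_supp X Z -> disj_supp Y Z ->
  disj_supp X (add Y Z).
Proof.
move=> dXY dXZ dYZ.
have sYZ : supp_sub (add Y Z) (fun i => in_supp Y i \/ in_supp Z i) by apply: supp_sub_add.
by apply: disj_supp_sub (fun i iX => iX) sYZ _ => i iX [/(dXY i iX) | /(dXZ i iX)].
Qed.

Lemma disj_supp_act X Y u w : injective u -> injective w ->
  (forall x y, u x <> w y) -> disj_supp (act u X) (act w Y).
Proof.
move=> u_inj w_inj uw.
apply: disj_supp_sub (supp_sub_act (X := X) u_inj) (supp_sub_act (X := Y) w_inj) _.
by move=> i [x <-] [y /esym]; apply: uw.
Qed.

End Supports.

Lemma Permutation_perm_eq (T : eqType) (s s' : seq T) : Permutation s s' -> perm_eq s s'.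
Proof.
elim=> [||x y s0|s1 s2 s3 _ p12 _ p23] //.
- by move=> x s1 s2 _; rewrite perm_cons.
- by rewrite -[[:: y, x & s0]]/([:: y] ++ [:: x] ++ s0) perm_catCA.
- exact: seq.perm_trans p12 p23.
Qed.

Lemma Permutation_merge T (leT : rel T) (s1 s2 : seq T) :
  Permutation (merge leT s1 s2) (s1 ++ s2).
Proof.
elim: s1 s2 => [|x s1 IHs1] s2 //.
elim: s2 => [|y s2 IHs2]; first by rewrite cats0.
rewrite [merge _ _ _]/=; case: (leT x y); first by constructor; apply: IHs1.
apply: Permutation_trans (perm_skip y IHs2) _.
by apply: Permutation_trans (perm_swap _ _ _) _; constructor; apply: Permutation_middle.
Qed.

Lemma uniq_cons_cat (T : eqType) (a : T) (s1 s2 : seq T) : uniq (a :: s1 ++ s2) ->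
  [/\ uniq (a :: s1), uniq (a :: s2) & uniq (s1 ++ s2)].
Proof.
rewrite /= mem_cat negb_or => /andP[/andP[a1 a2] u12].
by rewrite a1 a2 u12; move: u12; rewrite cat_uniq => /and3P[-> _ ->].
Qed.

Lemma map_fst_zip (S T : Type) (s : seq S) (t : seq T) :
  size s <= size t -> map fst (zip s t) = s.
Proof. exact: unzip1_zip. Qed.

Section PartialSum.
Variables (T : Type) (op : T -> T -> T) (e : T) (compat : T -> T -> Prop).
Hypothesis compat_sym : forall x y, compat x y -> compat y x.
Hypothesis compat0 : forall x, compat x e.
Hypothesis compat_op : forall x y z,
  compat x y -> compat x z -> compat y z -> compat x (op y z).
Hypothesis opA : forall x y z,
  compat x y -> compat x z -> compat y z -> op (op x y) z = op x (op y z).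
Hypothesis opC : forall x y, compat x y -> op x y = op y x.
Hypothesis op0 : forall x, op e x = x.

Variables (I : Type) (key : I -> nat) (good : pred nat) (G : I -> T).
Hypothesis compat_good : forall x y,
  good (key x) -> good (key y) -> key x != key y -> compat (G x) (G y).

Definition psum (L : seq I) : T := foldr (fun x acc => op (G x) acc) e L.

Lemma compat_psum x L : good (key x) -> all good (map key L) ->
  uniq (map key (x :: L)) -> compat (G x) (psum L).
Proof.
elim: L x => [|y L IHL] x gx //= /andP[gy gL].
rewrite inE negb_or => /andP[/andP[xy xL] /andP[yL uL]].
apply: compat_op; first exact: compat_good.
- by apply: IHL; rewrite //= xL.
- by apply: IHL; rewrite //= yL.
Qed.

Lemma compat_psum2 L1 L2 : all good (map key (L1 ++ L2)) -> uniq (map key (L1 ++ L2)) ->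
  compat (psum L1) (psum L2).
Proof.
elim: L1 => [|x L1 IHL1] /=; first by move=> *; apply/compat_sym/compat0.
rewrite map_cat all_cat => /andP[gx /andP[g1 g2]] /uniq_cons_cat[u1 u2 u12].
apply/compat_sym/compat_op.
- exact/compat_sym/compat_psum.
- by apply/compat_sym/IHL1; rewrite map_cat ?all_cat ?g1.
- exact: compat_psum.
Qed.

Lemma psum_cat L1 L2 : all good (map key (L1 ++ L2)) -> uniq (map key (L1 ++ L2)) ->
  psum (L1 ++ L2) = op (psum L1) (psum L2).
Proof.
elim: L1 => [|x L1 IHL1] /=; first by rewrite op0.
rewrite map_cat all_cat => /andP[gx /andP[g1 g2]] /uniq_cons_cat[u1 u2 u12].
rewrite IHL1 ?map_cat ?all_cat ?g1 // opA //.
- exact: compat_psum.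
- exact: compat_psum.
- by apply: compat_psum2; rewrite map_cat ?all_cat ?g1.
Qed.

Lemma psum_perm L L' : Permutation L L' -> all good (map key L) -> uniq (map key L) ->
  psum L = psum L'.
Proof.
elim=> {L L'} [//|x L L' _ IHL|x y L|L L' L'' LL' IHL _ IHL'] /=.
- by move=> /andP[_ gL] /andP[_ uL]; rewrite IHL.
- move=> /and3P[gy gx gL] /and3P[yxL xL uL].
  move: yxL; rewrite inE negb_or => /andP[yx yL].
  have cyx : compat (G y) (G x) by apply: compat_good.
  have cy : compat (G y) (psum L) by apply: compat_psum; rewrite //= yL.
  have cx : compat (G x) (psum L) by apply: compat_psum; rewrite //= xL.
  by rewrite -opA // (opC cyx) opA //; apply: compat_sym.
- move=> gL uL; have pLL' := Permutation_perm_eq (Permutation_map key LL').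
  by rewrite IHL // IHL' // -?(perm_all _ pLL') -?(perm_uniq pLL').
Qed.

End PartialSum.

Lemma inj_on_tail m b : inj_on m.+1 b -> inj_on m (fun i => b i.+1).
Proof. by move=> b_inj i j x y im jm /b_inj[] // [-> ->]. Qed.

Lemma inj_on_inj m b i : inj_on m b -> i < m -> injective (b i).
Proof. by move=> b_inj im x y /b_inj[]. Qed.

Lemma inj_on_catl n m a a' : inj_on (n + m) (cat_inj n a a') -> inj_on n a.
Proof.
move=> a_inj i j x y ni nj; have := a_inj i j x y.
by rewrite /cat_inj ni nj !ltn_addr //; apply.
Qed.

Lemma inj_on_catr n m a a' : inj_on (n + m) (cat_inj n a a') -> inj_on m a'.
Proof.
move=> a_inj i j x y im jm; have := a_inj (n + i) (n + j) x y.
rewrite /cat_inj !ltn_add2l ![n + _ < n]ltnNge !leq_addr !addKn.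
by move=> /(_ im jm) e /e[/addnI -> ->].
Qed.

Lemma inj_on_cat n m a a' : inj_on n a -> inj_on m a' ->
  (forall i j x y, i < n -> j < m -> a i x <> a' j y) -> inj_on (n + m) (cat_inj n a a').
Proof.
move=> a_inj a'_inj aa' i j x y im jm; rewrite /cat_inj.
case: (ltnP i n) => ni; case: (ltnP j n) => nj.
- exact: a_inj.
- by move/aa' => []; rewrite // ltn_subLR.
- by move/esym/aa' => []; rewrite // ltn_subLR.
- move/a'_inj => []; rewrite ?ltn_subLR // => e ->.
  by rewrite -(subnK ni) -(subnK nj) e.
Qed.

Lemma inj_on_postc n e b : injective e -> inj_on n b -> inj_on n (postc e b).
Proof. by move=> e_inj b_inj i j x y im jm /e_inj; apply: b_inj. Qed.

Lemma inj_on_even_odd n m b c : inj_on n b -> inj_on m c ->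
  inj_on (n + m) (cat_inj n (postc double b) (postc (fun x => x.*2.+1) c)).
Proof.
move=> b_inj c_inj; apply: inj_on_cat.
- exact: inj_on_postc double_inj b_inj.
- by apply: inj_on_postc c_inj => x y [] /double_inj.
- by move=> i j x y _ _ /(congr1 odd); rewrite /postc /= !odd_double.
Qed.

Definition inj_keys (K : seq nat) (F : nat -> nat -> nat) : Prop :=
  forall k k' x y, k \in K -> k' \in K -> F k x = F k' y -> k = k' /\ x = y.

Lemma inj_keys_iota n F : inj_on n F -> inj_keys (iota 0 n) F.
Proof. by move=> F_inj k k' x y; rewrite !mem_iota; apply: F_inj. Qed.

Lemma pinj_inj i j x y : pinj i x = pinj j y -> i = j /\ x = y.
Proof.
elim: i j => [|i IHi] [|j]; rewrite /pinj ?expn0 ?mul1n.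
- by case=> /double_inj.
- by move/(congr1 odd); rewrite oddM oddX /= odd_double.
- by move/(congr1 odd); rewrite oddM oddX /= odd_double.
- by rewrite !expnS -!mulnA => /eqP; rewrite eqn_pmul2l // => /eqP /IHi[-> ->].
Qed.

Definition pinj_index (K : seq nat) : nat -> nat -> nat := fun k => pinj (index k K).

Lemma inj_keys_pinj_index K : inj_keys K (pinj_index K).
Proof.
move=> k k' x y kK k'K /pinj_inj[e ->]; split=> //.
by rewrite -(nth_index 0 kK) e nth_index.
Qed.

Section Category.
Variable C : parsummable.
Implicit Types (f g h : Mor C) (X Y Z W : Ob C).

Definition hom f X Y : Prop := dom f = X /\ cod f = Y.

Lemma hom_comp f g X Y Z : hom f X Y -> hom g Y Z -> hom (compm g f) X Z.
Proof.
move=> [df cf] [dg cg]; split; [rewrite dom_comp // | rewrite cod_comp //]; by rewrite cf dg.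
Qed.

Lemma hom_compA f g h X Y Z W : hom f X Y -> hom g Y Z -> hom h Z W ->
  compm h (compm g f) = compm (compm h g) f.
Proof. by move=> [_ cf] [dg cg] [dh _]; apply: Defs.compA; rewrite ?cf ?cg. Qed.

Lemma hom_idl f X Y : hom f X Y -> compm (idm Y) f = f.
Proof. by case=> _ <-; apply: comp_idl. Qed.

Lemma hom_idr f X Y : hom f X Y -> compm f (idm X) = f.
Proof. by case=> <- _; apply: comp_idr. Qed.

Lemma idm_inj X Y : idm X = idm Y -> X = Y.
Proof. by move/(congr1 (@dom C)); rewrite !dom_idm. Qed.

Lemma hom_addm f g X X' Y Y' : hom f X Y -> hom g X' Y' ->
  disj_supp X X' -> disj_supp Y Y' -> hom (addm f g) (add X X') (add Y Y').
Proof.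
move=> [df cf] [dg cg] dX dY.
by split; [rewrite dom_addm | rewrite cod_addm]; rewrite ?df ?dg ?cf ?cg.
Qed.

Lemma addm_comp_hom f g f' g' X X' Y Y' Z Z' :
  hom f X Y -> hom g X' Y' -> hom f' Y Z -> hom g' Y' Z' ->
  disj_supp X X' -> disj_supp Y Y' -> disj_supp Z Z' ->
  compm (addm f' g') (addm f g) = addm (compm f' f) (compm g' g).
Proof.
move=> [df cf] [dg cg] [df' cf'] [dg' cg'] dX dY dZ.
by rewrite addm_comp ?df ?dg ?cf ?cg ?cf' ?cg' ?df' ?dg'.
Qed.

End Category.

Section Transitions.
Variable C : parsummable.
Implicit Types (X Y : Ob C) (Xs Ys : seq (Ob C)).

Definition img_on (m : nat) (b : nat -> nat -> nat) (i : nat) : Prop :=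
  exists k x, k < m /\ b k x = i.

Lemma supp_sub_pushf Xs b : inj_on (size Xs) b -> supp_sub (pushf b Xs) (img_on (size Xs) b).
Proof.
elim: Xs b => [|X Xs IHXs] b b_inj /=; first by move=> i /zero_supp.
have b0_inj := inj_on_inj b_inj (ltn0Sn _).
have sX := supp_sub_act (X := X) b0_inj.
have sXs := IHXs _ (inj_on_tail b_inj).
have dX : disj_supp (act (b 0) X) (pushf (fun i => b i.+1) Xs).
  apply: disj_supp_sub sX sXs _ => i [x <-] [k [y [kXs /esym /b_inj]]].
  by case=> //; rewrite ltnS ltnW.
move=> i /(supp_sub_add dX sX sXs) [[x <-]|[k [y [kXs <-]]]]; first by exists 0, x.
by exists k.+1, y.
Qed.

Lemma disj_supp_pushf Xs Ys b c : inj_on (size Xs) b -> inj_on (size Ys) c ->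
  (forall k k' x y, k < size Xs -> k' < size Ys -> b k x <> c k' y) ->
  disj_supp (pushf b Xs) (pushf c Ys).
Proof.
move=> b_inj c_inj bc; apply: disj_supp_sub (supp_sub_pushf b_inj) (supp_sub_pushf c_inj) _.
by move=> i [k [x [kXs <-]]] [k' [y [kYs /esym]]]; apply: bc.
Qed.

Lemma disj_supp_pushf_cons X Xs b : inj_on (size Xs).+1 b ->
  disj_supp (act (b 0) X) (pushf (fun i => b i.+1) Xs).
Proof.
move=> b_inj; have b0_inj := inj_on_inj b_inj (ltn0Sn _).
apply: disj_supp_sub (supp_sub_act (X := X) b0_inj) (supp_sub_pushf (inj_on_tail b_inj)) _.
by move=> i [x <-] [k [y [kXs /esym /b_inj]]]; case=> //; rewrite ltnS ltnW.
Qed.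

Lemma disj_supp_pushf_cat Xs Ys b b' : inj_on (size Xs + size Ys) (cat_inj (size Xs) b b') ->
  disj_supp (pushf b Xs) (pushf b' Ys).
Proof.
move=> b_inj; apply: disj_supp_pushf (inj_on_catl b_inj) (inj_on_catr b_inj) _.
move=> k k' x y kXs k'Ys e; have := b_inj k (size Xs + k') x y.
rewrite /cat_inj kXs ltn_add2l [size Xs + _ < _]ltnNge leq_addr addKn ltn_addr //=.
move=> /(_ isT k'Ys e)[kk' _].
by move: kXs; rewrite kk' ltnNge leq_addr.
Qed.

Lemma trf_hom Xs a b : inj_on (size Xs) a -> inj_on (size Xs) b ->
  hom (trf a b Xs) (pushf b Xs) (pushf a Xs).
Proof.
elim: Xs a b => [|X Xs IHXs] a b a_inj b_inj /=; first by rewrite /hom dom_idm cod_idm.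
have [da ca] := IHXs _ _ (inj_on_tail a_inj) (inj_on_tail b_inj).
have a0_inj := inj_on_inj a_inj (ltn0Sn _); have b0_inj := inj_on_inj b_inj (ltn0Sn _).
have dd : disj_supp (dom (tr (a 0) (b 0) X)) (dom (trf (fun i => a i.+1) (fun i => b i.+1) Xs)).
  by rewrite dom_tr // da; apply: disj_supp_pushf_cons.
have dc : disj_supp (cod (tr (a 0) (b 0) X)) (cod (trf (fun i => a i.+1) (fun i => b i.+1) Xs)).
  by rewrite cod_tr // ca; apply: disj_supp_pushf_cons.
by rewrite /hom dom_addm // cod_addm // dom_tr // cod_tr // da ca.
Qed.

Lemma trf_comp Xs a b c : inj_on (size Xs) a -> inj_on (size Xs) b -> inj_on (size Xs) c ->
  compm (trf a b Xs) (trf b c Xs) = trf a c Xs.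
Proof.
elim: Xs a b c => [|X Xs IHXs] a b c a_inj b_inj c_inj /=.
  by have := comp_idl (idm (zero C)); rewrite cod_idm.
have a0_inj := inj_on_inj a_inj (ltn0Sn _).
have b0_inj := inj_on_inj b_inj (ltn0Sn _).
have c0_inj := inj_on_inj c_inj (ltn0Sn _).
have [a'_inj b'_inj c'_inj] := And3 (inj_on_tail a_inj) (inj_on_tail b_inj) (inj_on_tail c_inj).
have [db ca] := trf_hom a'_inj b'_inj.
have [dc cb] := trf_hom b'_inj c'_inj.
rewrite -addm_comp ?IHXs ?tr_comp //.
- by rewrite cod_tr // dom_tr.
- by rewrite cb db.
- by rewrite dom_tr // dc; apply: disj_supp_pushf_cons.
- by rewrite cod_tr // cb; apply: disj_supp_pushf_cons.
- by rewrite cod_tr // ca; apply: disj_supp_pushf_cons.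
Qed.

Lemma trf_id Xs a : inj_on (size Xs) a -> trf a a Xs = idm (pushf a Xs).
Proof.
elim: Xs a => [|X Xs IHXs] a a_inj //=.
rewrite tr_id ?IHXs ?addm_idm //; [exact: disj_supp_pushf_cons | exact: inj_on_tail
  | exact: inj_on_inj a_inj (ltn0Sn _)].
Qed.

Lemma trf_ext Xs a b a' b' : (forall i, i < size Xs -> a i = a' i) ->
  (forall i, i < size Xs -> b i = b' i) -> trf a b Xs = trf a' b' Xs.
Proof.
elim: Xs a b a' b' => [|X Xs IHXs] a b a' b' aa' bb' //=.
rewrite aa' // bb' //; congr addm.
by apply: IHXs => i iXs; [apply: (aa' i.+1) | apply: (bb' i.+1)].
Qed.

Lemma pushf_ext Xs b b' : (forall i, i < size Xs -> b i = b' i) -> pushf b Xs = pushf b' Xs.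
Proof.
elim: Xs b b' => [|X Xs IHXs] b b' bb' //=.
by rewrite bb' //; congr add; apply: IHXs => i iXs; apply: (bb' i.+1).
Qed.

End Transitions.

Section KeyedSums.
Variable C : parsummable.
Implicit Types (Xs : seq (Ob C)) (f g h : Mor C) (L : seq (nat * Ob C)).

Definition disj_mor f g : Prop := disj_supp (dom f) (dom g) /\ disj_supp (cod f) (cod g).

Lemma disj_mor_sym f g : disj_mor f g -> disj_mor g f.
Proof. by case=> dd dc; split; apply: disj_supp_sym. Qed.

Lemma disj_mor0 f : disj_mor f (idm (zero C)).
Proof. by split; rewrite ?dom_idm ?cod_idm; apply: disj_supp0. Qed.

Lemma disj_mor_addm f g h : disj_mor f g -> disj_mor f h -> disj_mor g h ->
  disj_mor f (addm g h).
Proof.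
move=> [dfg cfg] [dfh cfh] [dgh cgh].
by split; rewrite ?dom_addm ?cod_addm //; apply: disj_supp_add.
Qed.

Lemma addm_disjA f g h : disj_mor f g -> disj_mor f h -> disj_mor g h ->
  addm (addm f g) h = addm f (addm g h).
Proof. by move=> [? ?] [? ?] [? ?]; apply: addmA. Qed.

Lemma addm_disjC f g : disj_mor f g -> addm f g = addm g f.
Proof. by case; apply: addmC. Qed.

Definition ktrf (F G : nat -> nat -> nat) L : Mor C := trf (restr F L) (restr G L) (map snd L).

Lemma ktrf_psum F G L :
  ktrf F G L = psum (@addm C) (idm (zero C)) (fun p => tr (F p.1) (G p.1) p.2) L.
Proof. by elim: L => [|p L IHL] //=; rewrite -IHL. Qed.

Lemma disj_mor_tr K F G (p q : nat * Ob C) : inj_keys K F -> inj_keys K G ->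
  p.1 \in K -> q.1 \in K -> p.1 != q.1 ->
  disj_mor (tr (F p.1) (G p.1) p.2) (tr (F q.1) (G q.1) q.2).
Proof.
move=> F_inj G_inj pK qK /eqP pq.
have inj_at H k : inj_keys K H -> k \in K -> injective (H k).
  by move=> H_inj kK x y /H_inj[].
have [Fp Fq] := conj (inj_at F _ F_inj pK) (inj_at F _ F_inj qK).
have [Gp Gq] := conj (inj_at G _ G_inj pK) (inj_at G _ G_inj qK).
rewrite /disj_mor dom_tr // dom_tr // cod_tr // cod_tr //.
split; apply: disj_supp_act => // x y e.
- by have [] := G_inj _ _ _ _ pK qK e.
- by have [] := F_inj _ _ _ _ pK qK e.
Qed.

Lemma ktrf_cat L1 L2 F G : uniq (map fst (L1 ++ L2)) ->
  inj_keys (map fst (L1 ++ L2)) F -> inj_keys (map fst (L1 ++ L2)) G ->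
  ktrf F G (L1 ++ L2) = addm (ktrf F G L1) (ktrf F G L2).
Proof.
move=> uL F_inj G_inj; rewrite !ktrf_psum.
apply: (psum_cat disj_mor_sym disj_mor0 disj_mor_addm addm_disjA (@addm0f C)
  (key := fst) (good := fun k => k \in map fst (L1 ++ L2))) => //.
by move=> p q; apply: disj_mor_tr.
Qed.

Lemma ktrf_perm L L' F G : Permutation L L' -> uniq (map fst L) ->
  inj_keys (map fst L) F -> inj_keys (map fst L) G -> ktrf F G L = ktrf F G L'.
Proof.
move=> LL' uL F_inj G_inj; rewrite !ktrf_psum.
apply: (psum_perm disj_mor_sym disj_mor0 disj_mor_addm addm_disjA addm_disjC
  (key := fst) (good := fun k => k \in map fst L)) => //.
by move=> p q; apply: disj_mor_tr.
Qed.

Lemma ktrf_iota k Ys F G :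
  ktrf F G (zip (iota k (size Ys)) Ys) = trf (fun j => F (k + j)) (fun j => G (k + j)) Ys.
Proof.
elim: Ys k => [|Y Ys IHYs] k //=.
rewrite /ktrf /= addn0; congr addm; rewrite [LHS]IHYs.
by apply: trf_ext => i _; rewrite addSnnS.
Qed.

Lemma trf_cat_inj Xs Ys a a' b b' :
  inj_on (size Xs + size Ys) (cat_inj (size Xs) a a') ->
  inj_on (size Xs + size Ys) (cat_inj (size Xs) b b') ->
  trf (cat_inj (size Xs) a a') (cat_inj (size Xs) b b') (Xs ++ Ys) =
  addm (trf a b Xs) (trf a' b' Ys).
Proof.
move=> a_inj b_inj.
set E1 := zip (iota 0 (size Xs)) Xs; set E2 := zip (iota (size Xs) (size Ys)) Ys.
have keysE : map fst (E1 ++ E2) = iota 0 (size Xs + size Ys).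
  by rewrite map_cat !map_fst_zip ?size_iota // iotaD.
transitivity (ktrf (cat_inj (size Xs) a a') (cat_inj (size Xs) b b') (E1 ++ E2)).
  by rewrite /E1 /E2 -zip_cat ?size_iota // -{2}(add0n (size Xs)) -iotaD -size_cat ktrf_iota.
rewrite ktrf_cat ?keysE ?iota_uniq //; try exact: inj_keys_iota.
rewrite !ktrf_iota; congr addm; apply: trf_ext => i iXs;
  by rewrite /cat_inj ?add0n ?iXs // ltnNge leq_addr addKn.
Qed.

Lemma pushf_cat_inj Xs Ys b b' : inj_on (size Xs + size Ys) (cat_inj (size Xs) b b') ->
  pushf (cat_inj (size Xs) b b') (Xs ++ Ys) = add (pushf b Xs) (pushf b' Ys).
Proof.
move=> b_inj; apply: idm_inj.
(* Compare the identities, which are the transition morphisms [b, b]. *)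
rewrite -addm_idm; last exact: disj_supp_pushf_cat.
rewrite -!trf_id ?trf_cat_inj ?size_cat //.
all: by [apply: inj_on_catl b_inj | apply: inj_on_catr b_inj].
Qed.

Lemma restr_cat F L1 L2 : restr F (L1 ++ L2) = cat_inj (size L1) (restr F L1) (restr F L2).
Proof.
apply: functional_extensionality => i; apply: functional_extensionality => x.
by rewrite /cat_inj /restr map_cat nth_cat size_map; case: ifP.
Qed.

Lemma inj_on_restr L F : uniq (map fst L) -> inj_keys (map fst L) F ->
  inj_on (size (map snd L)) (restr F L).
Proof.
move=> uL F_inj i j x y; rewrite !size_map -(size_map fst) => iL jL.
case/F_inj; try exact: mem_nth.
by move=> /eqP; rewrite nth_uniq // => /eqP.
Qed.

Lemma perm_eq_keys L L' : Permutation L L' -> perm_eq (map fst L) (map fst L').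
Proof. by move=> LL'; apply/Permutation_perm_eq/Permutation_map. Qed.

Lemma pinj_restr L : uniq (map fst L) ->
  forall j, j < size (map snd L) -> pinj j = restr (pinj_index (map fst L)) L j.
Proof.
move=> uL j; rewrite size_map -(size_map fst) => jL.
by apply: functional_extensionality => x; rewrite /restr /pinj_index index_uniq.
Qed.

Lemma inj_keys_perm L L' F : Permutation L L' -> inj_keys (map fst L) F ->
  inj_keys (map fst L') F.
Proof. by move=> /perm_eq_keys/perm_mem pK F_inj k k' x y; rewrite -!pK; apply: F_inj. Qed.

Lemma pushf_perm L L' F : Permutation L L' -> uniq (map fst L) -> inj_keys (map fst L) F ->
  pushf (restr F L) (map snd L) = pushf (restr F L') (map snd L').
Proof.
move=> LL' uL F_inj.
have pK := perm_eq_keys LL'.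
have uL' : uniq (map fst L') by rewrite -(perm_uniq pK).
have F_inj' := inj_keys_perm LL' F_inj.
apply: idm_inj; rewrite -!trf_id; try exact: inj_on_restr.
exact: (ktrf_perm (F := F) (G := F) LL').
Qed.

End KeyedSums.

Section Sigma.
Variable C : parsummable.
Implicit Types (t : sig_mor C) (L : seq (nat * Ob C)).

Lemma srep_hom t phi psi : sig_valid t ->
  inj_on (size (s_src t)) phi -> inj_on (size (s_tgt t)) psi ->
  hom (s_f (srep t phi psi)) (pushf phi (s_src t)) (pushf psi (s_tgt t)).
Proof.
move=> [in_inj [out_inj [df cf]]] phi_inj psi_inj /=.
by apply: hom_comp (trf_hom psi_inj out_inj); apply: hom_comp (trf_hom in_inj phi_inj) _.
Qed.

Lemma srep_valid t phi psi : sig_valid t ->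
  inj_on (size (s_src t)) phi -> inj_on (size (s_tgt t)) psi -> sig_valid (srep t phi psi).
Proof. by move=> tv phi_inj psi_inj; have [] := srep_hom tv phi_inj psi_inj. Qed.

Lemma sig_rel_srep t phi psi : sig_valid t ->
  inj_on (size (s_src t)) phi -> inj_on (size (s_tgt t)) psi -> sig_rel t (srep t phi psi).
Proof. by move=> tv phi_inj psi_inj; split => //; split; first exact: srep_valid. Qed.

Lemma srep_self t : sig_valid t -> s_f (srep t (s_in t) (s_out t)) = s_f t.
Proof. by move=> [in_inj [out_inj fh]] /=; rewrite !trf_id // (hom_idr fh) (hom_idl fh). Qed.

Lemma srep_change t phi psi phi' psi' : sig_valid t ->
  inj_on (size (s_src t)) phi -> inj_on (size (s_tgt t)) psi ->
  inj_on (size (s_src t)) phi' -> inj_on (size (s_tgt t)) psi' ->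
  s_f (srep t phi psi) =
  compm (trf psi psi' (s_tgt t)) (compm (s_f (srep t phi' psi')) (trf phi' phi (s_src t))).
Proof.
move=> [in_inj [out_inj fh]] phi_inj psi_inj phi'_inj psi'_inj /=.
have hE := trf_hom phi'_inj phi_inj; have hD := trf_hom in_inj phi'_inj.
have hB := trf_hom psi'_inj out_inj; have hA := trf_hom psi_inj psi'_inj.
rewrite -(hom_compA hE (hom_comp hD fh) hB) -(hom_compA hE hD fh) trf_comp //.
by rewrite (hom_compA (hom_comp (trf_hom in_inj phi_inj) fh) hB hA) trf_comp.
Qed.

Lemma srep_rel t t' phi psi : sig_rel t t' ->
  inj_on (size (s_src t)) phi -> inj_on (size (s_tgt t)) psi ->
  s_f (srep t phi psi) = s_f (srep t' phi psi).
Proof.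
move=> [tv [[in'_inj [out'_inj _]] [es [et ef]]]] phi_inj psi_inj.
rewrite es et in in'_inj out'_inj.
by rewrite (srep_change tv phi_inj psi_inj in'_inj out'_inj) /= ef es et.
Qed.

Lemma srep_equiv t t' : sig_equiv t t' ->
  [/\ s_src t = s_src t', s_tgt t = s_tgt t' &
      forall phi psi, inj_on (size (s_src t)) phi -> inj_on (size (s_tgt t)) psi ->
        s_f (srep t phi psi) = s_f (srep t' phi psi)].
Proof.
elim=> {t t'} [t t' tt'|t|t t' _ [es et E]|t t' t'' _ [es et E] _ [es' et' E']].
- by have [_ [_ [-> [-> _]]]] := tt'; split=> // phi psi; apply: srep_rel.
- by [].
- split=> [|| phi psi phi_inj psi_inj]; rewrite ?es ?et //.
  by rewrite E ?es ?et.
- split=> [|| phi psi phi_inj psi_inj]; rewrite ?es ?es' ?et ?et' //.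
  by rewrite E // E' -?es -?et.
Qed.

Lemma scomp_valid t1 t2 : sig_valid t1 -> sig_valid t2 -> s_tgt t1 = s_src t2 ->
  sig_valid (scomp t2 t1).
Proof.
move=> [in1_inj [out1_inj f1h]] [in2_inj [out2_inj f2h]] e; rewrite -e in in2_inj f2h.
by split=> //; split=> //; apply: hom_comp f2h; apply: hom_comp f1h (trf_hom in2_inj out1_inj).
Qed.

Lemma scomp_srep t1 t2 phi psi rho : sig_valid t1 -> sig_valid t2 -> s_tgt t1 = s_src t2 ->
  inj_on (size (s_src t1)) phi -> inj_on (size (s_tgt t1)) psi ->
  inj_on (size (s_tgt t2)) rho ->
  s_f (srep (scomp t2 t1) phi rho) = compm (s_f (srep t2 psi rho)) (s_f (srep t1 phi psi)).
Proof.
move=> [in1_inj [out1_inj f1h]] [in2_inj [out2_inj f2h]] e phi_inj psi_inj rho_inj /=.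
rewrite -e in in2_inj f2h *.
have h1 := trf_hom in1_inj phi_inj; have hm := trf_hom in2_inj out1_inj.
have hr := trf_hom rho_inj out2_inj.
have hp1 := trf_hom psi_inj out1_inj; have hp2 := trf_hom in2_inj psi_inj.
have hf1t := hom_comp h1 f1h; have hZ := hom_comp hf1t hp1.
rewrite -(hom_compA hZ (hom_comp hp2 f2h) hr) -(hom_compA hZ hp2 f2h).
rewrite (hom_compA hf1t hp1 hp2) trf_comp //.
by rewrite -(hom_compA h1 (hom_comp f1h hm) f2h) -(hom_compA h1 f1h hm).
Qed.

Lemma stensor_valid t1 t2 : sig_valid t1 -> sig_valid t2 -> sig_valid (stensor t1 t2).
Proof.
move=> t1v t2v; have [in1_inj [out1_inj _]] := t1v; have [in2_inj [out2_inj _]] := t2v.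
have ini := inj_on_even_odd in1_inj in2_inj; have outi := inj_on_even_odd out1_inj out2_inj.
rewrite /sig_valid /= !size_cat; split=> //; split=> //.
rewrite !pushf_cat_inj //; apply: hom_addm; try exact: disj_supp_pushf_cat.
- by apply: srep_hom => //; apply: inj_on_postc => //; apply: double_inj.
- by apply: srep_hom => //; apply: inj_on_postc => // x y [] /double_inj.
Qed.

Lemma stensor_srep t1 t2 phi1 phi2 psi1 psi2 : sig_valid t1 -> sig_valid t2 ->
  inj_on (size (s_src t1) + size (s_src t2)) (cat_inj (size (s_src t1)) phi1 phi2) ->
  inj_on (size (s_tgt t1) + size (s_tgt t2)) (cat_inj (size (s_tgt t1)) psi1 psi2) ->
  s_f (srep (stensor t1 t2) (cat_inj (size (s_src t1)) phi1 phi2)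
                            (cat_inj (size (s_tgt t1)) psi1 psi2)) =
  addm (s_f (srep t1 phi1 psi1)) (s_f (srep t2 phi2 psi2)).
Proof.
move=> t1v t2v phi_inj psi_inj.
have [in1_inj [out1_inj _]] := t1v; have [in2_inj [out2_inj _]] := t2v.
have ini := inj_on_even_odd in1_inj in2_inj; have outi := inj_on_even_odd out1_inj out2_inj.
have [phi1_inj phi2_inj] := conj (inj_on_catl phi_inj) (inj_on_catr phi_inj).
have [psi1_inj psi2_inj] := conj (inj_on_catl psi_inj) (inj_on_catr psi_inj).
have [ina_inj inb_inj] := conj (inj_on_catl ini) (inj_on_catr ini).
have [outa_inj outb_inj] := conj (inj_on_catl outi) (inj_on_catr outi).
rewrite /= !trf_cat_inj //.
have fah := srep_hom t1v ina_inj outa_inj; have fbh := srep_hom t2v inb_inj outb_inj.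
rewrite (addm_comp_hom (trf_hom ina_inj phi1_inj) (trf_hom inb_inj phi2_inj) fah fbh);
  try exact: disj_supp_pushf_cat.
rewrite (addm_comp_hom (hom_comp (trf_hom ina_inj phi1_inj) fah)
                       (hom_comp (trf_hom inb_inj phi2_inj) fbh)
                       (trf_hom psi1_inj outa_inj) (trf_hom psi2_inj outb_inj));
  try exact: disj_supp_pushf_cat.
by congr addm; apply/esym/srep_change.
Qed.

(* The coherence isomorphism of Sigma(C) putting the entries of L in the order of L'. *)
Definition sperm_keys L L' : sig_mor C :=
  sperm (map snd L) (map snd L') (fun j => index (nth 0 (map fst L') j) (map fst L)).

Lemma sperm_keys_valid L L' : Permutation L L' -> uniq (map fst L) ->
  sig_valid (sperm_keys L L').
Proof.
move=> LL' uL; have uL' : uniq (map fst L') by rewrite -(perm_uniq (perm_eq_keys LL')).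
have P_inj := inj_keys_pinj_index (K := map fst L).
split; first by move=> i j x y _ _ /pinj_inj.
split; first exact: inj_on_restr uL' (inj_keys_perm LL' P_inj).
split; first exact: dom_idm.
by rewrite cod_idm (pushf_ext (pinj_restr uL)) (pushf_perm LL').
Qed.

Lemma srep_sperm_keys L L' F : Permutation L L' -> uniq (map fst L) ->
  inj_keys (map fst L) F ->
  s_f (srep (sperm_keys L L') (restr F L) (restr F L')) = idm (pushf (restr F L) (map snd L)).
Proof.
move=> LL' uL F_inj; set P := pinj_index (map fst L).
have F_inj' := inj_on_restr uL F_inj.
have P_inj := inj_on_restr uL (inj_keys_pinj_index (K := map fst L)).
rewrite /= (trf_ext (pinj_restr uL) (fun _ _ => erefl)) (pushf_ext (pinj_restr uL)).
rewrite (hom_idl (trf_hom P_inj F_inj')).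
rewrite -[trf (restr F L') _ _]/(ktrf F P L') -(ktrf_perm LL') //; last exact: inj_keys_pinj_index.
by rewrite /ktrf trf_comp // trf_id.
Qed.

End Sigma.

Section Theta.
Variables (C : parsummable) (phi : nat -> nat -> nat).
Hypothesis phi_inj : forall i j x y, phi i x = phi j y -> i = j /\ x = y.
Implicit Types (P Q : seq (nat * Ob C)) (a b : th_mor C).

Lemma inj_keys_phi K : inj_keys K phi.
Proof. by move=> k k' x y _ _ /phi_inj. Qed.

Lemma th_ob_uniq P : th_ob P -> uniq (map fst P).
Proof. exact: sorted_uniq ltn_trans ltnn _. Qed.

Lemma restr_phi_inj P : uniq (map fst P) -> inj_on (size (map snd P)) (restr phi P).
Proof. by move=> uP; apply: inj_on_restr uP (@inj_keys_phi _). Qed.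

Lemma th_disj_uniq P Q : th_ob P -> th_ob Q -> th_disj P Q -> uniq (map fst (P ++ Q)).
Proof.
move=> /th_ob_uniq uP /th_ob_uniq uQ dPQ; rewrite map_cat cat_uniq uP uQ andbT /=.
by apply/hasPn => k kQ; apply/negP => kP; apply: dPQ kP kQ.
Qed.

Lemma restr_phi_cat_inj P Q : uniq (map fst (P ++ Q)) ->
  inj_on (size (map snd P) + size (map snd Q))
         (cat_inj (size (map snd P)) (restr phi P) (restr phi Q)).
Proof. by move/restr_phi_inj; rewrite restr_cat map_cat size_cat size_map. Qed.

Lemma S_ob_cat P Q : uniq (map fst (P ++ Q)) ->
  disj_supp (S_ob phi P) (S_ob phi Q) /\ S_ob phi (P ++ Q) = add (S_ob phi P) (S_ob phi Q).
Proof.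
move=> /restr_phi_cat_inj PQ_inj; split; first exact: disj_supp_pushf_cat PQ_inj.
by rewrite /S_ob restr_cat map_cat -(size_map snd P) pushf_cat_inj.
Qed.

Lemma S_ob_add P Q : th_ob P -> th_ob Q -> th_disj P Q ->
  disj_supp (S_ob phi P) (S_ob phi Q) /\ S_ob phi (th_add P Q) = add (S_ob phi P) (S_ob phi Q).
Proof.
move=> sP sQ dPQ; have uPQ := th_disj_uniq sP sQ dPQ.
have uM : uniq (map fst (th_add P Q)).
  by rewrite (perm_uniq (perm_eq_keys (Permutation_merge _ _ _))).
rewrite /S_ob (pushf_perm (Permutation_merge _ _ _) uM (@inj_keys_phi _)).
exact: S_ob_cat.
Qed.

Lemma th_valid_restr_inj a : th_valid a ->
  inj_on (size (s_src (t_rep a))) (restr phi (t_src a)) /\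
  inj_on (size (s_tgt (t_rep a))) (restr phi (t_tgt a)).
Proof.
by move=> [sP [sQ [-> [-> _]]]]; split; apply: restr_phi_inj; apply: th_ob_uniq.
Qed.

Lemma S_mor_rep a : th_valid a ->
  let r := srep (t_rep a) (restr phi (t_src a)) (restr phi (t_tgt a)) in
  sig_valid r /\ sig_equiv (t_rep a) r /\ S_mor phi a = s_f r /\
  (forall f : Mor C,
     let r' := SigMor (s_src (t_rep a)) (s_tgt (t_rep a))
                      (restr phi (t_src a)) (restr phi (t_tgt a)) f in
     sig_valid r' -> sig_equiv (t_rep a) r' -> f = S_mor phi a).
Proof.
move=> av r; have [_ [_ [_ [_ tv]]]] := av; have [phi_inj' psi_inj'] := th_valid_restr_inj av.
split; first exact: srep_valid.
split; first exact/rst_step/sig_rel_srep.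
split=> // f r' r'v /srep_equiv[_ _ E].
by rewrite /S_mor E // (srep_self r'v).
Qed.

Lemma S_mor_equiv a b : th_valid a -> th_equiv a b -> S_mor phi a = S_mor phi b.
Proof.
move=> av [eP [eQ /srep_equiv[_ _ E]]]; have [phi_inj' psi_inj'] := th_valid_restr_inj av.
by rewrite /S_mor -eP -eQ E.
Qed.

Lemma S_mor_hom a : th_valid a -> hom (S_mor phi a) (S_ob phi (t_src a)) (S_ob phi (t_tgt a)).
Proof.
move=> av; have [phi_inj' psi_inj'] := th_valid_restr_inj av.
have [_ [_ [es [et tv]]]] := av.
by have := srep_hom tv phi_inj' psi_inj'; rewrite es et.
Qed.

Lemma S_mor_idm P theta : th_ob P -> inj_on (size P) theta ->
  S_mor phi (ThMor P P (SigMor (map snd P) (map snd P) theta theta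
                               (idm (pushf theta (map snd P))))) = idm (S_ob phi P).
Proof.
move=> sP; rewrite -(size_map snd) => theta_inj.
have rP_inj := restr_phi_inj (th_ob_uniq sP).
by rewrite /S_mor /= (hom_idl (trf_hom theta_inj rP_inj)) trf_comp // trf_id.
Qed.

Lemma S_mor_comp a b : th_valid a -> th_valid b -> t_tgt a = t_src b ->
  S_mor phi (th_comp b a) = compm (S_mor phi b) (S_mor phi a).
Proof.
move=> av bv e; have [phi_inj' psi_inj'] := th_valid_restr_inj av.
have [_ rho_inj] := th_valid_restr_inj bv.
have [_ [_ [_ [et tv]]]] := av; have [_ [_ [es' [_ t'v]]]] := bv.
by rewrite /S_mor /= -e; apply: scomp_srep; rewrite // et es' e.
Qed.

Lemma th_addm_rep a b : t_rep (th_addm a b) =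
  scomp (sperm_keys (t_tgt a ++ t_tgt b) (th_add (t_tgt a) (t_tgt b)))
        (scomp (stensor (t_rep a) (t_rep b))
               (sperm_keys (th_add (t_src a) (t_src b)) (t_src a ++ t_src b))).
Proof. by rewrite /th_addm /sperm_keys /= !map_cat. Qed.

Lemma S_mor_tensor a b : th_valid a -> th_valid b ->
  th_disj (t_src a) (t_src b) -> th_disj (t_tgt a) (t_tgt b) ->
  s_f (srep (stensor (t_rep a) (t_rep b))
            (restr phi (t_src a ++ t_src b)) (restr phi (t_tgt a ++ t_tgt b))) =
  addm (S_mor phi a) (S_mor phi b).
Proof.
move=> [oP [oQ [es [et tav]]]] [oP' [oQ' [es' [et' tbv]]]] dP dQ.
rewrite !restr_cat -(size_map snd (t_src a)) -(size_map snd (t_tgt a)) -es -et.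
rewrite stensor_srep //.
- by rewrite es es'; apply/restr_phi_cat_inj/th_disj_uniq.
- by rewrite et et'; apply/restr_phi_cat_inj/th_disj_uniq.
Qed.

Lemma S_mor_add a b : th_valid a -> th_valid b ->
  th_disj (t_src a) (t_src b) -> th_disj (t_tgt a) (t_tgt b) ->
  S_mor phi (th_addm a b) = addm (S_mor phi a) (S_mor phi b).
Proof.
move=> av bv dP dQ.
have [oP [oQ [es [et tav]]]] := av; have [oP' [oQ' [es' [et' tbv]]]] := bv.
set P := t_src a in oP es dP *; set Q := t_tgt a in oQ et dQ *.
set P' := t_src b in oP' es' dP *; set Q' := t_tgt b in oQ' et' dQ *.
have uPP := th_disj_uniq oP oP' dP; have uQQ := th_disj_uniq oQ oQ' dQ.
have mP : Permutation (th_add P P') (P ++ P') by apply: Permutation_merge.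
have mQ : Permutation (Q ++ Q') (th_add Q Q') by apply/Permutation_sym/Permutation_merge.
have uMP : uniq (map fst (th_add P P')) by rewrite (perm_uniq (perm_eq_keys mP)).
have uMQ : uniq (map fst (th_add Q Q')) by rewrite -(perm_uniq (perm_eq_keys mQ)).
have sPv := sperm_keys_valid mP uMP; have sQv := sperm_keys_valid mQ uQQ.
have Tv := stensor_valid tav tbv.
have eT : s_tgt (stensor (t_rep a) (t_rep b)) = map snd (Q ++ Q') by rewrite /= et et' map_cat.
have eS : s_src (stensor (t_rep a) (t_rep b)) = map snd (P ++ P') by rewrite /= es es' map_cat.
have [rMP rMQ] := conj (restr_phi_inj uMP) (restr_phi_inj uMQ).
have [rPP rQQ] := conj (restr_phi_inj uPP) (restr_phi_inj uQQ).
rewrite /S_mor th_addm_rep (scomp_srep (psi := restr phi (Q ++ Q'))) ?eT //;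
  last exact: scomp_valid sPv Tv (esym eS).
rewrite (scomp_srep (psi := restr phi (P ++ P'))) ?eT //.
rewrite !srep_sperm_keys //; try exact: (@inj_keys_phi _).
rewrite S_mor_tensor //.
have [dSP EP] := S_ob_add oP oP' dP; have [dSQ EQ] := S_ob_cat uQQ.
have h := hom_addm (S_mor_hom av) (S_mor_hom bv) dSP dSQ.
rewrite -[pushf _ (map snd (th_add P P'))]/(S_ob phi (th_add P P')).
rewrite -[pushf _ (map snd (Q ++ Q'))]/(S_ob phi (Q ++ Q')) EP EQ.
by rewrite (hom_idr h) (hom_idl h).
Qed.

End Theta.

Theorem proposition3p22 (C : parsummable) (phi : nat -> nat -> nat)
  (phi_inj : forall i j x y, phi i x = phi j y -> i = j /\ x = y) :
  (* well-defined: (phi|_B kappa_B, S(a), phi|_A kappa_A) is the unique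
     representative of a with these injections *)
  (forall a : th_mor C, th_valid a ->
     let r := srep (t_rep a) (restr phi (t_src a)) (restr phi (t_tgt a)) in
     sig_valid r /\ sig_equiv (t_rep a) r /\ S_mor phi a = s_f r /\
     (forall f : Mor C,
        let r' := SigMor (s_src (t_rep a)) (s_tgt (t_rep a))
                         (restr phi (t_src a)) (restr phi (t_tgt a)) f in
        sig_valid r' -> sig_equiv (t_rep a) r' -> f = S_mor phi a)) /\
  (forall a b : th_mor C, th_valid a -> th_valid b -> th_equiv a b ->
     S_mor phi a = S_mor phi b) /\
  (* functor *)
  (forall a : th_mor C, th_valid a ->
     dom (S_mor phi a) = S_ob phi (t_src a) /\ cod (S_mor phi a) = S_ob phi (t_tgt a)) /\
  (forall (P : seq (nat * Ob C)) (theta : nat -> nat -> nat),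
     th_ob P -> inj_on (size P) theta ->
     S_mor phi (ThMor P P (SigMor (map snd P) (map snd P) theta theta
                                  (idm (pushf theta (map snd P)))))
       = idm (S_ob phi P)) /\
  (forall a b : th_mor C, th_valid a -> th_valid b -> t_tgt a = t_src b ->
     S_mor phi (th_comp b a) = compm (S_mor phi b) (S_mor phi a)) /\
  (* preserves sums *)
  S_ob phi [::] = zero C /\
  (forall P Q : seq (nat * Ob C), th_ob P -> th_ob Q -> th_disj P Q ->
     disj_supp (S_ob phi P) (S_ob phi Q) /\
     S_ob phi (th_add P Q) = add (S_ob phi P) (S_ob phi Q)) /\
  (forall a b : th_mor C, th_valid a -> th_valid b ->
     th_disj (t_src a) (t_src b) -> th_disj (t_tgt a) (t_tgt b) ->
     S_mor phi (th_addm a b) = addm (S_mor phi a) (S_mor phi b)).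
Proof.
split; first exact: S_mor_rep.
split; first by move=> a b av _; apply: S_mor_equiv.
split; first exact: S_mor_hom.
split; first exact: S_mor_idm.
split; first exact: S_mor_comp.
split; first by [].
split; first exact: S_ob_add.
exact: S_mor_add.
Qed.
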